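(* Let $R$ be a commutative ring which is free as an abelian group, $n\ge2$, $p$ a prime, and write $\Gamma_m=\Gamma(SL_n(R),p^m)$. Let $r,s,l\ge1$ with $l\le s$. Then the group extension $$1\to\Gamma_{r+s-l}/\Gamma_{r+s}\to\Gamma_r/\Gamma_{r+s}\to\Gamma_r/\Gamma_{r+s-l}\to1$$ is central if and only if $r\ge l$.
   Context: $\Gamma(SL_n(R),p^m)=\ker\big(SL_n(R)\to SL_n(R\otimes_{\mathbb{Z}}\mathbb{Z}/p^m)\big)$. An extension $1\to N\to G\to Q\to1$ is central if $N$ lies in the center of $G$. *)

From mathcomp Require Import all_boot all_order all_algebra.
Set Implicit Arguments. Unset Strict Implicit. Unset Printing Implicit Defensive.
Import GRing.Theory.
Local Open Scope ring_scope.

Definition free_abelian (R : nzRingType) : Prop :=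
  exists (I : eqType) (b : I -> R),
    (forall x : R, exists (s : seq I) (c : I -> int),
        x = \sum_(i <- s) b i *~ c i) /\
    (forall (s : seq I) (c : I -> int), uniq s ->
        \sum_(i <- s) b i *~ c i = 0 -> forall i, i \in s -> c i = 0).

(* Membership in the principal congruence subgroup
   Gamma(SL_n(R), p^m) = ker (SL_n(R) -> SL_n(R (x)_Z Z/p^m)),
   using R (x)_Z Z/p^m = R / p^m R: A has determinant 1 and A = 1 mod p^m R
   entrywise. *)
Definition in_Gamma (R : comNzRingType) (n p m : nat) (A : 'M[R]_n) : Prop :=
  \det A = 1 /\ exists C : 'M[R]_n, A = 1%:M + (p ^ m)%N%:R *: C.

(* For groups K <= N <= G of matrices (given as predicates), the extension
   1 -> N/K -> G/K -> G/N -> 1 is central iff N/K lies in the center of G/K,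
   i.e. for all a in G, b in N, the cosets (a b) K and (b a) K coincide. *)
Definition quotient_central (R : comNzRingType) (n : nat)
    (G N K : 'M[R]_n -> Prop) : Prop :=
  forall A B : 'M[R]_n, G A -> N B ->
    exists C : 'M[R]_n, K C /\ A *m B = (B *m A) *m C.

From mathcomp Require Import all_boot all_order all_algebra.
From mathcomp Require Import zify.
Set Implicit Arguments. Unset Strict Implicit. Unset Printing Implicit Defensive.
Import GRing.Theory.
Local Open Scope ring_scope.

(* Write A = 1 + p^r X in Gamma_r and B = 1 + p^t Y in Gamma_t, t = r+s-l.
   Then AB - BA = p^(r+t) (XY - YX), so AB = BA C with C = 1 + p^(r+t) (BA)^-1 [X,Y],
   and C lies in Gamma_(r+s) as soon as r+t >= r+s, i.e. r >= l.
   Conversely, for the elementary matrices A = 1 + p^r e_01 and B = 1 + p^t e_10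
   the (0,0) entry of AB - BA is exactly p^(r+t); if AB = BA C with
   C = 1 + p^(r+s) D this gives p^(r+t) (1 - p^(l-r) y) = 0 in R.  When R is free
   abelian it is torsion free and p is not a unit (a unit would make 1 divisible by
   every power of p), so this is impossible when r < l. *)

Section FreeAbelian.
Variables (R : nzRingType) (I : eqType) (b : I -> R).
Hypothesis bgen : forall x : R, exists (s : seq I) (c : I -> int),
  x = \sum_(i <- s) b i *~ c i.
Hypothesis bfree : forall (s : seq I) (c : I -> int), uniq s ->
  \sum_(i <- s) b i *~ c i = 0 -> forall i, i \in s -> c i = 0.

Lemma basis_uniq_rep (x : R) : exists (u : seq I) (e : I -> int),
  uniq u /\ x = \sum_(i <- u) b i *~ e i.
Proof.
have [s [c ->]] := bgen x; elim: s => [|i s IHs].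
  by exists [::], c; rewrite !big_nil.
rewrite big_cons; have [u [e [Uu ->]]] := IHs; case Hiu: (i \in u).
  exists u, (fun j => e j + (j == i)%:Z * c i); split => //.
  under [RHS]eq_bigr => j _ do rewrite mulrzDr.
  rewrite big_split /= addrC; congr (_ + _).
  rewrite (bigD1_seq i) //= eqxx mul1r big1 ?addr0 // => j /negbTE ->.
  by rewrite mul0r mulr0z.
exists (i :: u), (fun j => if j == i then c i else e j); split; first by rewrite /= Hiu.
rewrite big_cons eqxx; congr (_ + _); apply: eq_big_seq => j ju /=.
by case: eqP => // ji; rewrite ji Hiu in ju.
Qed.

Lemma basis_coef_eq (s s' : seq I) (c c' : I -> int) : uniq s -> uniq s' ->
  \sum_(i <- s) b i *~ c i = \sum_(i <- s') b i *~ c' i ->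
  forall i, i \in s -> c i = if i \in s' then c' i else 0.
Proof.
move=> Us Us' E i is_.
pose u := undup (s ++ s'); have Uu : uniq u := undup_uniq _.
have extend (t : seq I) (d : I -> int) : uniq t -> {subset t <= u} ->
    \sum_(j <- t) b j *~ d j = \sum_(j <- u) b j *~ (if j \in t then d j else 0).
  move=> Ut tu; transitivity (\sum_(j <- u | j \in t) b j *~ d j).
    rewrite -[RHS]big_filter; apply: perm_big; apply: uniq_perm; rewrite ?filter_uniq //.
    by move=> j; rewrite mem_filter; case: (boolP (j \in t)) => // /tu.
  by rewrite big_mkcond; apply: eq_bigr => j _; case: (j \in t); rewrite ?mulr0z.
have E0 : \sum_(j <- u) b j *~ ((if j \in s then c j else 0)
                                 - (if j \in s' then c' j else 0)) = 0.
  under eq_bigr => j _ do rewrite mulrzBr.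
  rewrite sumrB -!extend ?E ?subrr // => j;
    by rewrite /u mem_undup mem_cat => ->; rewrite ?orbT.
have := bfree Uu E0 (i := i); rewrite /u mem_undup mem_cat is_ => /(_ isT) /eqP.
by rewrite subr_eq0 => /eqP.
Qed.

Lemma basis_mulrn_eq0 (m : nat) (x : R) : (0 < m)%N -> x *+ m = 0 -> x = 0.
Proof.
move=> m_gt0; have [u [e [Uu ->]]] := basis_uniq_rep x; rewrite -sumrMnl => Em.
have em0 : forall i, i \in u -> e i * m%:Z = 0.
  apply: bfree Uu _; rewrite -[RHS]Em; apply: eq_bigr => i _.
  by rewrite mulrzA pmulrn.
apply: big1_seq => i /andP[_ /em0 /eqP].
by rewrite mulf_eq0 eqz_nat eqn0Ngt m_gt0 orbF => /eqP ->.
Qed.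

Lemma expn_self_dvdn_eq0 (P m : nat) : (1 < P)%N -> (P ^ m %| m)%N -> m = 0%N.
Proof.
move=> P_gt1; case: m => // m /(dvdn_leq (ltn0Sn m)).
by rewrite leqNgt ltn_expl.
Qed.

(* A nonzero coefficient c of x cannot be divisible by P^|c|. *)
Lemma basis_divisible_eq0 (P : nat) (x : R) : (1 < P)%N ->
  (forall k, exists y, x = y *+ (P ^ k)) -> x = 0.
Proof.
move=> P_gt1 dvdx; have [u [e [Uu Ex]]] := basis_uniq_rep x.
rewrite Ex; apply: big1_seq => i /andP[_ iu].
suff -> : e i = 0 by rewrite mulr0z.
have [y Ey] := dvdx `|e i|%N; have [u' [e' [Uu' Ey']]] := basis_uniq_rep y.
have Ex' : x = \sum_(j <- u') b j *~ (e' j * (P ^ `|e i|)%N%:Z).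
  rewrite Ey Ey' -sumrMnl; apply: eq_bigr => j _.
  by rewrite mulrzA pmulrn.
have := basis_coef_eq Uu Uu' (etrans (esym Ex) Ex') iu.
case: (i \in u') => [ei | -> //].
apply/eqP; rewrite -absz_eq0; apply/eqP; apply: (expn_self_dvdn_eq0 P_gt1).
by rewrite {2}ei abszM dvdn_mull.
Qed.

End FreeAbelian.

Lemma free_abelian_mulrn_eq0 (R : nzRingType) (m : nat) (x : R) :
  free_abelian R -> (0 < m)%N -> x *+ m = 0 -> x = 0.
Proof. by move=> [I [b [bgen bfree]]]; apply: basis_mulrn_eq0. Qed.

Lemma free_abelian_natr_neq1 (R : comNzRingType) (P : nat) (y : R) :
  free_abelian R -> (1 < P)%N -> 1 != P%:R * y.
Proof.
move=> [I [b [bgen bfree]]] P_gt1; apply/eqP => E.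
suff : (1 : R) = 0 by move/eqP; rewrite oner_eq0.
apply: (basis_divisible_eq0 bgen bfree P_gt1) => k; exists (y ^+ k).
by rewrite -mulr_natl natrX -exprMn -E expr1n.
Qed.

Lemma free_abelian_expn_neq (R : comNzRingType) (p k j : nat) (y : R) :
  free_abelian R -> (1 < p)%N -> (0 < j)%N ->
  (p ^ k)%N%:R != (p ^ (k + j))%N%:R * y :> R.
Proof.
move=> fa p_gt1 j_gt0; apply/eqP => E.
have : (1 - (p ^ j)%N%:R * y) *+ p ^ k = 0 :> R.
  by rewrite -mulr_natl mulrBr mulr1 mulrA -natrM -expnD E subrr.
have pk_gt0 : (0 < p ^ k)%N by rewrite expn_gt0 (ltnW p_gt1).
move/(free_abelian_mulrn_eq0 fa pk_gt0)/eqP; rewrite subr_eq0.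
by apply/negP/free_abelian_natr_neq1; rewrite // -[1%N](expn0 p) ltn_exp2l.
Qed.

Lemma det_1add_delta_lt (R : comNzRingType) n (i j : 'I_n) (c : R) : (j < i)%N ->
  \det (1%:M + c *: delta_mx i j) = 1.
Proof.
move=> lt_ji; rewrite det_trig.
  apply: big1 => k _; rewrite !mxE eqxx /=.
  have [-> | _] := eqVneq k i; last by rewrite mulr0 addr0.
  by rewrite (gtn_eqF lt_ji : (i == j) = false) andbF mulr0 addr0.
apply/is_trig_mxP => a a' lt_aa'; rewrite !mxE (ltn_eqF lt_aa' : (a == a') = false) /=.
have [ei | _] := eqVneq a i; rewrite ?mulr0 ?addr0 //.
have [ej | _] := eqVneq a' j; rewrite ?mulr0 ?addr0 //.
by move: lt_aa' lt_ji; rewrite ei ej; lia.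
Qed.

Lemma det_1add_delta (R : comNzRingType) n (i j : 'I_n) (c : R) : i != j ->
  \det (1%:M + c *: delta_mx i j) = 1.
Proof.
rewrite neq_ltn => /orP[lt_ij | lt_ji]; last exact: det_1add_delta_lt.
rewrite -det_tr linearD /= linearZ /= tr_scalar_mx trmx_delta.
exact: det_1add_delta_lt.
Qed.

Lemma mulmx_1addZ_swap (R : comNzRingType) n (a b : R) (X Y : 'M[R]_n) :
  (1%:M + a *: X) *m (1%:M + b *: Y) =
  (1%:M + b *: Y) *m (1%:M + a *: X) + (a * b) *: (X *m Y - Y *m X).
Proof.
rewrite !mulmxDl !mulmxDr !mul1mx !mulmx1 -!scalemxAl -!scalemxAr !scalerA.
rewrite scalerBr (mulrC b a) -!addrA; congr (_ + _).
by rewrite [_ *: (Y *m X) + _]addrC subrK addrCA.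
Qed.

Lemma in_Gamma_swap_factor (R : comNzRingType) (n p m : nat) (A B W : 'M[R]_n) :
  \det A = 1 -> \det B = 1 -> A *m B = B *m A + (p ^ m)%N%:R *: W ->
  exists C, in_Gamma p m C /\ A *m B = (B *m A) *m C.
Proof.
move=> detA detB E; set q : R := (p ^ m)%N%:R.
have detBA : \det (B *m A) = 1 by rewrite det_mulmx detA detB mulr1.
pose C := 1%:M + q *: (\adj (B *m A) *m W).
have EC : A *m B = (B *m A) *m C.
  by rewrite mulmxDr mulmx1 -scalemxAr mulmxA mul_mx_adj detBA mul1mx.
exists C; split => //; split; last by exists (\adj (B *m A) *m W).
by move: (congr1 determinant EC); rewrite !det_mulmx detA detB !mul1r => <-.
Qed.

Lemma Gamma_quotient_central (R : comNzRingType) (n p r s l : nat) :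
  (l <= r)%N ->
  quotient_central (@in_Gamma R n p r) (@in_Gamma R n p (r + s - l))
                   (@in_Gamma R n p (r + s)).
Proof.
move=> le_lr A B [detA [X EA]] [detB [Y EB]].
apply: in_Gamma_swap_factor detA detB _.
rewrite EA EB mulmx_1addZ_swap -natrM -expnD.
have -> : (r + (r + s - l) = (r + s) + (r - l))%N by lia.
by rewrite expnD natrM -scalerA.
Qed.

Lemma Gamma_quotient_noncentral (R : comNzRingType) (n p r s l : nat) :
  free_abelian R -> (2 <= n)%N -> (1 < p)%N -> (r < l)%N -> (l <= r + s)%N ->
  ~ quotient_central (@in_Gamma R n p r) (@in_Gamma R n p (r + s - l))
                     (@in_Gamma R n p (r + s)).
Proof.
move=> fa n_ge2 p_gt1 lt_rl le_l_rs central.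
have n_gt0 : (0 < n)%N by lia.
pose i0 := Ordinal n_gt0; pose i1 := Ordinal n_ge2.
have i01 : i0 != i1 by [].
set t := (r + s - l)%N.
pose a : R := (p ^ r)%N%:R; pose b : R := (p ^ t)%N%:R.
pose A := 1%:M + a *: delta_mx i0 i1; pose B := 1%:M + b *: delta_mx i1 i0.
have GA : in_Gamma p r A by split; [exact: det_1add_delta | exists (delta_mx i0 i1)].
have GB : in_Gamma p t B.
  by split; [apply: det_1add_delta; rewrite eq_sym | exists (delta_mx i1 i0)].
have [C [[_ [D ->]] E]] := central A B GA GB.
set y := ((B *m A) *m D) i0 i0.
have E00 : a * b = (p ^ (r + s))%N%:R * y.
  move: E; rewrite [in RHS]mulmxDr mulmx1 -scalemxAr {1}/A {1}/B mulmx_1addZ_swap.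
  move=> /(addrI _) /(congr1 (fun M : 'M[R]_n => M i0 i0)).
  rewrite [X in _ = X -> _]mxE -/y => <-.
  by rewrite !mul_delta_mx !mxE eqxx /= subr0 mulr1.
have lr_gt0 : (0 < l - r)%N by rewrite subn_gt0.
have := @free_abelian_expn_neq R p (r + t) (l - r) y fa p_gt1 lr_gt0.
have -> : (r + t + (l - r) = r + s)%N by rewrite /t; lia.
by rewrite expnD natrM -E00 eqxx.
Qed.

Theorem lemma7p1 (R : comNzRingType) (n p r s l : nat) :
  free_abelian R -> (2 <= n)%N -> prime p ->
  (1 <= r)%N -> (1 <= s)%N -> (1 <= l)%N -> (l <= s)%N ->
  (quotient_central (@in_Gamma R n p r) (@in_Gamma R n p (r + s - l))
                    (@in_Gamma R n p (r + s))
   <-> (l <= r)%N).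
Proof.
move=> fa n_ge2 p_prime _ _ _ le_ls; split => [central | le_lr].
  rewrite leqNgt; apply/negP => lt_rl.
  apply: Gamma_quotient_noncentral fa n_ge2 (prime_gt1 p_prime) lt_rl _ central.
  exact: leq_trans le_ls (leq_addl r s).
exact: Gamma_quotient_central.
Qed.
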